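(* Let $\mathcal B=(\mathcal T,A,p,c)$ be a BMDP. For every list $\alpha\in\mathcal T^*$ of types, $\mathrm{ETotal}_*(\alpha)=\sum_{i=1}^{|\alpha|}\mathrm{ETotal}_*(\alpha_i)$ (in $[0,\infty]$). Moreover, for every $q\in\mathcal T$, $\mathrm{ETotal}_*(q)=\min_{a\in A(q)}\Big(c(q,a)+\sum_{\alpha\in\mathcal T^*}p(q,a)(\alpha)\sum_{i=1}^{|\alpha|}\mathrm{ETotal}_*(\alpha_i)\Big)$.
   Context: A branching Markov decision process (BMDP) is a tuple $\mathcal B=(\mathcal T,A,p,c)$ where $\mathcal T$ is a finite set of types, $A$ is a finite set of actions, $p:\mathcal T\times A\to \mathrm{Dist}(\mathcal T^* )$ is a partial function assigning to some pairs $(q,a)$ a probability distribution with finite support over the set $\mathcal T^*$ of finite lists of types, and $c:\mathcal T\times A\to\mathbb R_{>0}$ is a cost function with strictly positive values. $A(q)$ denotes the (nonempty) set of actions $a$ for which $p(q,a)$ is defined. For a list $\alpha$, $|\alpha|$ is its length and $\alpha_i$ its $i$-th element; $\varepsilon$ is the empty list. Semantics: the BMDP induces an MDP whose states are lists $\alpha\in\mathcal T^*$. In state $\alpha$ the enabled actions are pairs $(i,a)$ with $1\le i\le|\alpha|$ and $a\in A(\alpha_i)$; taking $(i,a)$ incurs cost $c(\alpha_i,a)$ and moves to $\alpha_1\cdots\alpha_{i-1}\cdot\beta\cdot\alpha_{i+1}\cdots\alpha_{|\alpha|}$ with probability $p(\alpha_i,a)(\beta)$. The state $\varepsilon$ has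 no actions and is absorbing with no further cost. A strategy maps each finite history to a probability distribution over actions enabled in its last state; a strategy $\sigma$ and initial state $\alpha$ induce a probability measure on runs. $\mathrm{ETotal}_N(\alpha,\sigma)$ is the expected sum of costs in the first $N$ steps, $\mathrm{ETotal}_*(\alpha,\sigma)=\lim_{N\to\infty}\mathrm{ETotal}_N(\alpha,\sigma)\in[0,\infty]$, and $\mathrm{ETotal}_*(\alpha)=\inf_\sigma\mathrm{ETotal}_*(\alpha,\sigma)$ over all strategies. Conventions $0\cdot\infty=0$, $r+\infty=\infty$. *)

From HB Require Import structures.
From mathcomp Require Import all_boot all_order all_algebra.
From mathcomp Require Import all_classical all_reals ereal.
Set Implicit Arguments. Unset Strict Implicit. Unset Printing Implicit Defensive.
Import Order.TTheory GRing.Theory Num.Theory.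
Local Open Scope ring_scope.

Record findist (R : realType) (X : eqType) := FinDist {
  fd_supp : seq X;
  fd_w : X -> R;
  fd_uniq : uniq fd_supp;
  fd_ge0 : forall x, 0 <= fd_w x;
  fd_out : forall x, x \notin fd_supp -> fd_w x = 0;
  fd_sum1 : \sum_(x <- fd_supp) fd_w x = 1 }.

(* A branching MDP (T, Act, p, c): p is a partial function (None = undefined),
   c has strictly positive values, and A(q) is nonempty for all q. *)
Record BMDP (R : realType) (T Act : finType) := MkBMDP {
  bp : T -> Act -> option (findist R (seq T));
  bc : T -> Act -> R;
  bc_pos : forall q a, 0 < bc q a;
  bA_nonempty : forall q, exists a, isSome (bp q a) }.

Section Semantics.
Variables (R : realType) (T Act : finType) (B : BMDP R T Act).

Definition elt (alpha : seq T) (i : 'I_(size alpha)) : T := tnth (in_tuple alpha) i.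

Definition replace_at (alpha : seq T) (i : nat) (beta : seq T) : seq T :=
  take i alpha ++ beta ++ drop i.+1 alpha.

(* Actions of the induced MDP: (i, a) with i a 0-indexed position. *)
Definition mact := (nat * Act)%type.

(* A finite history: initial state followed by the (action, state) steps. *)
Definition hist := (seq T * seq (mact * seq T))%type.

Definition last_state (h : hist) : seq T := last h.1 [seq s.2 | s <- h.2].

Definition extend (h : hist) (m : mact) (beta : seq T) : hist :=
  (h.1, rcons h.2 (m, beta)).

Definition enabled (alpha : seq T) (m : mact) : Prop :=
  exists (i : 'I_(size alpha)), m.1 = i /\ isSome (bp B (elt i) m.2).

Definition is_strategy (sigma : hist -> mact -> R) : Prop :=
  (forall h m, 0 <= sigma h m) /\
  (forall h m, ~ enabled (last_state h) m -> sigma h m = 0) /\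
  (forall h, last_state h != [::] ->
     \sum_(i < size (last_state h)) \sum_(a : Act | isSome (bp B (elt i) a))
        sigma h (nat_of_ord i, a) = 1).

(* Expected total cost of the first N steps, starting from history h
   (this is the expectation under the measure induced by sigma on runs,
   computed by unfolding the first step). *)
Fixpoint ETotN (N : nat) (sigma : hist -> mact -> R) (h : hist) : R :=
  match N with
  | 0 => 0
  | N'.+1 =>
    let alpha := last_state h in
    \sum_(i < size alpha) \sum_(a : Act)
      match bp B (elt i) a with
      | None => 0
      | Some d =>
          sigma h (nat_of_ord i, a) *
          (bc B (elt i) a +
           \sum_(beta <- fd_supp d)
              fd_w d beta * ETotN N' sigma (extend h (nat_of_ord i, a)
                                              (replace_at alpha i beta)))
      end
  end.

Definition ETotal_N (N : nat) (alpha : seq T) (sigma : hist -> mact -> R) : R :=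
  ETotN N sigma (alpha, [::]).

(* ETotal_*(alpha, sigma) = lim_N ETotal_N (nondecreasing in N, so = sup) *)
Definition ETotal_star_strat (alpha : seq T) (sigma : hist -> mact -> R) : \bar R :=
  ereal_sup [set (ETotal_N N alpha sigma)%:E | N in [set: nat]].

Definition ETotal_star (alpha : seq T) : \bar R :=
  ereal_inf [set ETotal_star_strat alpha sigma | sigma in is_strategy].

(* c(q,a) + sum_beta p(q,a)(beta) * sum_i ETotal_*(beta_i), for a in A(q);
   +oo for a not in A(q) (neutral for the min below). *)
Definition bellman_val (q : T) (a : Act) : \bar R :=
  match bp B q a with
  | None => +oo%E
  | Some d =>
    ((bc B q a)%:E +
     \sum_(beta <- fd_supp d)
        ((fd_w d beta)%:E * \sum_(i < size beta) ETotal_star [:: elt i]))%E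
  end.

End Semantics.

(* Let W_k be the k-step value iteration on types: W_0 = 0 and
   W_{k+1}(q) = min_{a in A(q)} (c(q,a) + sum_beta p(q,a)(beta) sum_{x in beta} W_k(x)),
   and let W = sup_k W_k in the extended reals.  The proof has three parts.
   1. W is a fixed point of the Bellman operator: the operator commutes with
      nondecreasing limits, because it is built from finite sums of
      nonnegative terms and a finite minimum.
   2. Lower bound: every strategy pays at least sum_{x in alpha} W_k(x), for
      every k.  Give each type of the state a depth label (initially k), and
      the children of an expanded type the label of their parent minus one.
      The labelled sum of W_label minus a "debt" term, which accounts for the
      expansions of types whose label reached 0, is a potential that one step
      of any strategy can decrease by at most the cost paid (potential_step);
      after enough steps the debt vanishes.
   3. Upper bound: the greedy strategy expanding the leftmost type with an
      action attaining the minimum in the Bellman equation for W pays at most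
      sum_{x in alpha} W(x) in any number of steps.
   Hence ETotal_*(alpha) = sum_{x in alpha} W(x), and both claims follow. *)

From HB Require Import structures.
From mathcomp Require Import all_boot all_order all_algebra.
From mathcomp Require Import all_classical all_reals ereal.
From mathcomp Require Import topology normedtype sequences.
From mathcomp Require Import lra zify.
Import Order.TTheory GRing.Theory Num.Theory.
Set Implicit Arguments. Unset Strict Implicit. Unset Printing Implicit Defensive.
Local Open Scope classical_set_scope.
Local Open Scope ring_scope.

Lemma ereal_sup_nondecreasing (R : realType) (u : nat -> \bar R) (l : \bar R) :
  {homo u : n m / (n <= m)%N >-> (n <= m)%E} -> u @ \oo --> l ->
  ereal_sup (range u) = l.
Proof.
by move=> u_nd u_l; apply: (cvg_unique _ (ereal_nondecreasing_cvgn u_nd)).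
Qed.

Lemma max0_shift (R : realDomainType) (x y z : R) :
  0 <= z -> x <= y + z -> Order.max 0 x <= Order.max 0 y + z.
Proof.
move=> z_ge0 xyz; rewrite ge_max; apply/andP; split.
  by apply: addr_ge0 => //; rewrite le_max lexx.
by apply: le_trans xyz _; rewrite lerD2r le_max lexx orbT.
Qed.

Section BMDPValue.
Variables (R : realType) (T Act : finType) (B : BMDP R T Act).

Definition cmin : R := \big[Order.min/1]_(x : T * Act) bc B x.1 x.2.

Lemma cmin_gt0 : 0 < cmin.
Proof. by apply: lt_bigmin => // x _; exact: bc_pos. Qed.

Lemma cmin_le q a : cmin <= bc B q a.
Proof. exact: (bigmin_le _ (q, a) (fun x => bc B x.1 x.2)). Qed.

(* Some enabled action of each type, the default of the finite minima below. *)
Definition act0 (q : T) : Act := xchoose (bA_nonempty B q).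

Lemma act0P q : isSome (bp B q (act0 q)).
Proof. exact: (xchooseP (bA_nonempty B q)). Qed.

Definition bellman (f : T -> R) (q : T) (a : Act) : R :=
  match bp B q a with
  | None => 0
  | Some d => bc B q a + \sum_(b <- fd_supp d) fd_w d b * \sum_(x <- b) f x
  end.

Definition bellmanE (f : T -> \bar R) (q : T) (a : Act) : \bar R :=
  match bp B q a with
  | None => +oo%E
  | Some d =>
      ((bc B q a)%:E + \sum_(b <- fd_supp d) (fd_w d b)%:E * \sum_(x <- b) f x)%E
  end.

Lemma bellman_ge0 f q a : (forall x, 0 <= f x) -> 0 <= bellman f q a.
Proof.
move=> f_ge0; rewrite /bellman; case: (bp B q a) => // d.
apply: addr_ge0; first exact/ltW/bc_pos.
by apply: sumr_ge0 => b _; apply: mulr_ge0; [exact: fd_ge0 | exact: sumr_ge0].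
Qed.

Lemma bellman_mono f g q a : (forall x, f x <= g x) -> bellman f q a <= bellman g q a.
Proof.
move=> fg; rewrite /bellman; case: (bp B q a) => // d.
rewrite lerD2l; apply: ler_sum => b _; apply: ler_wpM2l; first exact: fd_ge0.
exact: ler_sum.
Qed.

Lemma bellmanE_ge0 f q a : (forall x, (0 <= f x)%E) -> (0 <= bellmanE f q a)%E.
Proof.
move=> f_ge0; rewrite /bellmanE; case: (bp B q a) => // d.
apply: adde_ge0; first by rewrite lee_fin; exact/ltW/bc_pos.
apply: sume_ge0 => b _; apply: mule_ge0; first by rewrite lee_fin; exact: fd_ge0.
exact: sume_ge0.
Qed.

(* Value iteration: vi k q is the optimal cost of q when the game is stopped
   (for free) after k rounds of expansion. *)
Fixpoint vi (k : nat) : T -> R :=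
  match k with
  | 0 => fun _ => 0
  | k'.+1 => fun q =>
      \big[Order.min/bellman (vi k') q (act0 q)]_(a | isSome (bp B q a))
        bellman (vi k') q a
  end.

Lemma vi_ge0 k x : 0 <= vi k x.
Proof.
elim: k x => [|k IH] x //=.
by apply: le_bigmin => [|a _]; exact: bellman_ge0.
Qed.

Lemma vi_le_bellman k q a : isSome (bp B q a) -> vi k.+1 q <= bellman (vi k) q a.
Proof. exact: bigmin_le_cond. Qed.

Lemma vi_mono x : {homo vi^~ x : k k' / (k <= k')%N >-> k <= k'}.
Proof.
have step k y : vi k y <= vi k.+1 y.
  elim: k y => [|k IH] y; first exact: vi_ge0.
  apply: le_bigmin => [|a Ha].
    exact: le_trans (vi_le_bellman k (act0P y)) (bellman_mono _ _ _).
  exact: le_trans (vi_le_bellman k Ha) (bellman_mono _ _ _).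
apply: homo_leq => [y|y k1 k2|k]; [exact: lexx | exact: le_trans | exact: step].
Qed.

Local Open Scope ereal_scope.

Definition W (x : T) : \bar R := ereal_sup (range (fun k => (vi k x)%:E)).

Lemma vi_cvg x : (fun k => (vi k x)%:E) @ \oo --> W x.
Proof. by apply: ereal_nondecreasing_cvgn => n m nm; rewrite lee_fin vi_mono. Qed.

Lemma vi_le_W k x : (vi k x)%:E <= W x.
Proof. by apply: ereal_sup_ubound; exists k. Qed.

Lemma W_ge0 x : 0 <= W x.
Proof. exact: le_trans (vi_le_W 0 x). Qed.

Lemma bellman_cvg q a : isSome (bp B q a) ->
  (fun k => (bellman (vi k) q a)%:E) @ \oo --> bellmanE W q a.
Proof.
rewrite /bellman /bellmanE; case: (bp B q a) => // d _.
under eq_fun do rewrite EFinD -sumEFin.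
apply: cvgeD; [exact: fin_num_adde_defr | exact: cvg_cst |].
apply: cvg_nnesum => [b _|b _].
  apply: nearW => k; rewrite lee_fin.
  by apply: mulr_ge0; [exact: fd_ge0 | apply: sumr_ge0 => x _; exact: vi_ge0].
under eq_fun do rewrite EFinM -sumEFin.
apply: cvgeZl => //; apply: cvg_nnesum => [x _|x _]; last exact: vi_cvg.
by apply: nearW => k; rewrite lee_fin vi_ge0.
Qed.

Lemma bellman_sup q a : isSome (bp B q a) ->
  ereal_sup (range (fun k => (bellman (vi k) q a)%:E)) = bellmanE W q a.
Proof.
move=> Ha; apply: ereal_sup_nondecreasing (bellman_cvg Ha) => n m nm.
by rewrite lee_fin; apply: bellman_mono => x; exact: vi_mono.
Qed.

(* W is below the Bellman operator applied to W, as each round of value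
   iteration is. *)
Lemma W_le_bellmanE q a : isSome (bp B q a) -> W q <= bellmanE W q a.
Proof.
move=> Ha; apply: ge_ereal_sup => _ [[|k] _ <-].
  exact/bellmanE_ge0/W_ge0.
apply: le_trans (_ : (bellman (vi k) q a)%:E <= _).
  by rewrite lee_fin; exact: vi_le_bellman.
by rewrite -bellman_sup //; apply: ereal_sup_ubound; exists k.
Qed.

(* If the minimum of the Bellman operator exceeded W q, then, the actions being
   finitely many, some round of value iteration would already exceed W q. *)
Lemma bellman_min_le_W q :
  \big[Order.min/+oo]_(a | isSome (bp B q a)) bellmanE W q a <= W q.
Proof.
rewrite leNgt; apply/negP => W_lt.
have W_fin : W q \is a fin_num.
  by rewrite ge0_fin_numE ?W_ge0 // (lt_le_trans W_lt (leey _)).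
have round_gt a : exists k, isSome (bp B q a) -> W q < (bellman (vi k) q a)%:E.
  have [Ha|_] := boolP (isSome (bp B q a)); last by exists 0%N.
  have : W q < bellmanE W q a 
    by apply: lt_le_trans W_lt _; exact: bigmin_le_cond.
  by rewrite -bellman_sup // => /ereal_sup_gt [_ [k _ <-] Hk]; exists k.
have [f Hf] := choice round_gt.
pose K := (\max_(a : Act) f a)%N.
have HK a : isSome (bp B q a) -> W q < (bellman (vi K) q a)%:E.
  move=> Ha; apply: lt_le_trans (Hf a Ha) _; rewrite lee_fin.
  by apply: bellman_mono => x; apply: vi_mono; exact: leq_bigmax.
have : W q < (vi K.+1 q)%:E.
  rewrite -(fineK W_fin) lte_fin; apply: lt_bigmin => [|a Ha].
    by rewrite -lte_fin fineK //; exact: HK (act0P q).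
  by rewrite -lte_fin fineK //; exact: HK.
by rewrite ltNge vi_le_W.
Qed.

Lemma W_bellman q : W q = \big[Order.min/+oo]_(a | isSome (bp B q a)) bellmanE W q a.
Proof.
apply/le_anti; rewrite bellman_min_le_W andbT.
by apply: le_bigmin => [|a Ha]; [exact: leey | exact: W_le_bellmanE].
Qed.

Lemma opt_act_ex q : exists a, isSome (bp B q a) && (bellmanE W q a <= W q).
Proof.
case/bigmin_leP: (bellman_min_le_W q) => [oo_le | [a Ha le_a]].
  by exists (act0 q); rewrite act0P /= (le_trans (leey _) oo_le).
by exists a; rewrite Ha.
Qed.

Definition opt_act q : Act := xchoose (opt_act_ex q).

Lemma opt_actP q : isSome (bp B q (opt_act q)) && (bellmanE W q (opt_act q) <= W q).
Proof. exact: xchooseP (opt_act_ex q). Qed.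

Local Close Scope ereal_scope.

Definition max_branch : nat := \max_(x : T * Act)
  match bp B x.1 x.2 with Some p => \max_(b <- fd_supp p) size b | None => 0%N end.

Lemma size_le_max_branch q a p b :
  bp B q a = Some p -> b \in fd_supp p -> (size b <= max_branch)%N.
Proof.
move=> Ep b_in.
pose F x := match bp B x.1 x.2 with
            | Some p => \max_(b <- fd_supp p) size b | None => 0%N end.
apply: leq_trans (leq_bigmax (F := F) (q, a)); rewrite /F /= Ep.
exact: (@leq_bigmax_seq _ _ xpredT (fun b : seq T => size b) b b_in isT).
Qed.

(* budget d bounds the number of expansions of a type labelled d and of its
   descendants: budget (d + 1) = max_branch * budget d + 1. *)
Fixpoint budget (d : nat) : nat :=
  if d is d'.+1 then (max_branch * budget d').+1 else 0%N.

(* A labelled state attaches a depth label to each type.  Its value counts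
   vi label at each type; its budget sums the budgets of the labels. *)
Definition lvalue (l : seq (T * nat)) : R := \sum_(x <- l) vi x.2 x.1.
Definition lbudget (l : seq (T * nat)) : nat := \sum_(x <- l) budget x.2.

Definition lexpand (l1 l2 : seq (T * nat)) (d : nat) (b : seq T) : seq (T * nat) :=
  l1 ++ [seq (y, d.-1) | y <- b] ++ l2.

Lemma lbudget_expand l1 l2 q d b : (size b <= max_branch)%N ->
  (lbudget (lexpand l1 l2 d b) + (d != 0) <= lbudget (l1 ++ (q, d) :: l2))%N.
Proof.
move=> b_le; rewrite /lbudget !big_cat big_cons big_map /=.
rewrite big_const_seq count_predT iter_addn_0 /=.
case: d => [|d] /=; first by rewrite mul0n add0n addn0.
have : (budget d * size b <= max_branch * budget d)%N by rewrite mulnC leq_mul2r b_le orbT.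
lia.
Qed.

Definition vi_bound (k : nat) : R := cmin + \sum_(q : T) vi k q.

Lemma cmin_le_vi_bound k : cmin <= vi_bound k.
Proof. by rewrite lerDl; apply: sumr_ge0 => q _; exact: vi_ge0. Qed.

Lemma vi_le_vi_bound k d q : (d <= k)%N -> vi d q <= vi_bound k * (budget d)%:R.
Proof.
case: d => [|d] le_dk; first by rewrite mulr0.
have K_ge0 := le_trans (ltW cmin_gt0) (cmin_le_vi_bound k).
apply: le_trans (_ : vi_bound k <= _); last first.
  by rewrite ler_peMr //= ler1n.
apply: le_trans (vi_mono q le_dk) _; rewrite /vi_bound (bigD1 q) //= addrCA lerDl.
by rewrite addr_ge0 ?(ltW cmin_gt0) // sumr_ge0 // => x _; exact: vi_ge0.
Qed.

(* Hence the potential is nonpositive when no step is left. *)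
Lemma lvalue_le_budget k l : {in l, forall x, x.2 <= k}%N ->
  lvalue l <= vi_bound k * (lbudget l)%:R.
Proof.
move=> l_le; rewrite /lvalue /lbudget natr_sum mulr_sumr !big_seq.
by apply: ler_sum => x /l_le; exact: vi_le_vi_bound.
Qed.

(* The debt accounts for the expansions still to be paid for by the budget;
   it vanishes once N * cmin exceeds the (scaled) budget. *)
Definition debt (k N : nat) (l : seq (T * nat)) : R :=
  Order.max 0 (vi_bound k * (lbudget l)%:R - N%:R * cmin).

Definition potential (k N : nat) (l : seq (T * nat)) : R := lvalue l - debt k N l.

(* The extra charge of expanding a type labelled 0: its value vi 0 is 0, so the
   cost of the expansion is paid by reducing the debt instead. *)
Definition zero_charge (d : nat) : R := if d is 0 then cmin else 0.

Lemma debt_expand k N l1 l2 q d b : (size b <= max_branch)%N ->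
  debt k N (lexpand l1 l2 d b) <= debt k N.+1 (l1 ++ (q, d) :: l2) + zero_charge d.
Proof.
move=> b_le; apply: max0_shift; first by case: d => //=; exact: ltW cmin_gt0.
have := @lbudget_expand l1 l2 q d b b_le; rewrite -(ler_nat R) natrD.
have c_ge0 := ltW cmin_gt0; have cK := cmin_le_vi_bound k.
move/(ler_wpM2l (le_trans c_ge0 cK)); rewrite mulrDr.
by case: d => [|d] /=; rewrite ?mulr0 ?mulr1 -?natr1; lra.
Qed.

Lemma vi_expand d q a p : bp B q a = Some p ->
  vi d q + zero_charge d <=
    bc B q a + \sum_(b <- fd_supp p) fd_w p b * \sum_(y <- b) vi d.-1 y.
Proof.
move=> Ep; case: d => [|d] /=.
  rewrite add0r (eq_bigr (fun _ => 0)) ?big1 ?addr0 ?cmin_le // => b _.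
  by rewrite big1 ?mulr0.
by rewrite addr0; move: (@vi_le_bellman d q a); rewrite /bellman Ep; exact.
Qed.

Lemma potential_step k N l1 l2 q d a p : bp B q a = Some p ->
  potential k N.+1 (l1 ++ (q, d) :: l2) <=
    bc B q a + \sum_(b <- fd_supp p) fd_w p b * potential k N (lexpand l1 l2 d b).
Proof.
move=> Ep; set l := l1 ++ _ :: _.
pose V := lvalue l1 + lvalue l2; pose S b := \sum_(y <- b) vi d.-1 y.
have lvalue_l : lvalue l = V + vi d q.
  by rewrite /V /lvalue big_cat big_cons /=; lra.
have lvalue_e b : lvalue (lexpand l1 l2 d b) = V + S b.
  by rewrite /V /S /lvalue /lexpand !big_cat big_map /=; lra.
have debt_avg : \sum_(b <- fd_supp p) fd_w p b * debt k N (lexpand l1 l2 d b) <=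
    debt k N.+1 l + zero_charge d.
  rewrite -[X in _ <= X]mul1r -(fd_sum1 p) big_distrl /= !big_seq.
  apply: ler_sum => b b_in; apply: ler_wpM2l; first exact: fd_ge0.
  exact/debt_expand/(size_le_max_branch Ep b_in).
have vi_step := vi_expand d Ep; rewrite /potential lvalue_l.
rewrite (eq_bigr (fun b => V * fd_w p b + (fd_w p b * S b -
    fd_w p b * debt k N (lexpand l1 l2 d b)))); last first.
  by move=> b _; rewrite lvalue_e mulrBr mulrDr addrA [_ * V]mulrC.
rewrite big_split sumrB /= -mulr_sumr fd_sum1 mulr1 -/(S _).
lra.
Qed.

Lemma map_fst_lexpand (l : seq (T * nat)) i d b :
  map fst (lexpand (take i l) (drop i.+1 l) d b) = replace_at (map fst l) i b.
Proof.
rewrite /lexpand /replace_at !map_cat map_take map_drop -map_comp.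
by rewrite (eq_map (_ : fst \o _ =1 id)) ?map_id.
Qed.

Lemma lexpand_labels k l1 l2 q d b :
  {in l1 ++ (q, d) :: l2, forall x, x.2 <= k}%N ->
  {in lexpand l1 l2 d b, forall x, x.2 <= k}%N.
Proof.
move=> l_le x; rewrite /lexpand !mem_cat => /or3P [x_in|/mapP [y _ ->]|x_in].
- by apply: l_le; rewrite mem_cat x_in.
- apply: leq_trans (leq_pred d) (l_le (q, d) _).
  by rewrite mem_cat mem_head orbT.
- by apply: l_le; rewrite mem_cat in_cons x_in !orbT.
Qed.

Lemma last_extend (h : hist T Act) (m : mact Act) (b : seq T) :
  last_state (extend h m b) = b.
Proof. by rewrite /last_state /extend /= map_rcons last_rcons. Qed.

Lemma elt_nth (al : seq T) (i : 'I_(size al)) x0 : elt i = nth x0 al i.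
Proof. by rewrite /elt (tnth_nth x0). Qed.

Lemma potential_le_ETotN sigma k : is_strategy B sigma -> forall N h l,
  map fst l = last_state h -> {in l, forall x, x.2 <= k}%N ->
  potential k N l <= ETotN B N sigma h.
Proof.
move=> sigmaP; elim=> [|N IH] h l l_h l_le.
  rewrite /potential /debt /= mul0r subr0 subr_le0.
  by apply: le_trans (lvalue_le_budget l_le) _; rewrite le_max lexx orbT.
have [h_nil|h_cons] := eqVneq (last_state h) [::].
  have -> : l = [::] by apply/eqP; rewrite -size_eq0 -(size_map fst) l_h h_nil.
  rewrite /= big1 => [|[j j_lt] _]; last by exfalso; rewrite h_nil in j_lt.
  by rewrite /potential /lvalue big_nil sub0r oppr_le0 le_max lexx.
rewrite -[potential _ _ _]mulr1 -(sigmaP.2.2 h h_cons) mulr_sumr /=.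
apply: ler_sum => i _; rewrite mulr_sumr [X in X <= _]big_mkcond /=.
apply: ler_sum => a _; case Ep: (bp B (elt i) a) => [p|] //=.
rewrite mulrC; apply: ler_wpM2l; first exact: sigmaP.1.
have i_lt : (i < size l)%N by rewrite -(size_map fst) l_h.
set d := (nth (elt i, 0%N) l i).2.
have l_split : l = take i l ++ (elt i, d) :: drop i.+1 l.
  suff -> : (elt i, d) = nth (elt i, 0%N) l i by rewrite -drop_nth ?cat_take_drop.
  have : nth (elt i) (map fst l) i = elt i by rewrite l_h -elt_nth.
  rewrite (nth_map (elt i, 0%N)) // => fst_nth.
  by rewrite -[X in (X, _) = _]fst_nth -surjective_pairing.
rewrite l_split in l_le; rewrite [X in potential _ _ X]l_split.
apply: le_trans (potential_step k N (take i l) (drop i.+1 l) d Ep) _.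
rewrite lerD2l; apply: ler_sum => b _; apply: ler_wpM2l; first exact: fd_ge0.
apply: IH; last exact: (@lexpand_labels k _ _ (elt i) d b l_le).
by rewrite last_extend map_fst_lexpand l_h.
Qed.

Local Open Scope ereal_scope.

Lemma vi_le_ETotal_strat sigma k (al : seq T) : is_strategy B sigma ->
  (\sum_(x <- al) vi k x)%:E <= ETotal_star_strat B al sigma.
Proof.
move=> sigmaP; pose l := [seq (x, k) | x <- al].
have l_al : map fst l = last_state ((al, [::]) : hist T Act) by rewrite -map_comp map_id.
have l_le : {in l, forall x, x.2 <= k}%N by move=> x /mapP [y _ ->].
pose N := (Num.truncn (vi_bound k * (lbudget l)%:R / cmin)).+1.
have debt0 : debt k N l = 0%R.
  apply/le_anti; rewrite ge_max lexx subr_le0 le_max lexx /= andbT.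
  by rewrite ltW // -ltr_pdivrMr ?cmin_gt0 // truncnS_gt.
have := potential_le_ETotN sigmaP N l_al l_le.
rewrite /potential debt0 subr0 /lvalue big_map => le_N.
apply: le_trans (_ : (ETotal_N B N al sigma)%:E <= _); first by rewrite lee_fin.
by apply: ereal_sup_ubound; exists N.
Qed.

Lemma sum_W_sup (al : seq T) :
  \sum_(x <- al) W x = ereal_sup (range (fun k => (\sum_(x <- al) vi k x)%:E)).
Proof.
symmetry; apply: ereal_sup_nondecreasing.
  by move=> n m nm; rewrite lee_fin; apply: ler_sum => x _; exact: vi_mono.
under eq_fun do rewrite -sumEFin.
apply: cvg_nnesum => [x _|x _]; last exact: vi_cvg.
by apply: nearW => k; rewrite lee_fin vi_ge0.
Qed.

Lemma W_le_ETotal (al : seq T) : \sum_(x <- al) W x <= ETotal_star B al.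
Proof.
apply: le_ereal_inf_tmp => _ [sigma sigmaP <-].
rewrite sum_W_sup; apply: ge_ereal_sup => _ [k _ <-].
exact: vi_le_ETotal_strat.
Qed.

Local Close Scope ereal_scope.

Definition greedy (h : hist T Act) (m : mact Act) : R :=
  if last_state h is q :: _ then (m == (0%N, opt_act q))%:R else 0%R.

Lemma greedy_cons h q t m : last_state h = q :: t ->
  greedy h m = (m == (0%N, opt_act q))%:R.
Proof. by rewrite /greedy => ->. Qed.

Lemma elt_ord0 (q : T) (t : seq T) : elt (ord0 : 'I_(size (q :: t))) = q.
Proof. by rewrite (elt_nth _ q). Qed.

Lemma greedy_strategy : is_strategy B greedy.
Proof.
rewrite /greedy; split; [|split].
- by move=> h m; case: (last_state h) => // q _; exact: ler0n.
- move=> h m; case: (last_state h) => [|q t] // not_enabled.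
  case: eqP => // m_opt; case: not_enabled; exists ord0; split; first by rewrite m_opt.
  by rewrite m_opt elt_ord0; case/andP: (opt_actP q).
- move=> h; case: (last_state h) => [|q t] // _.
  rewrite big_ord_recl [X in (_ + X)%R]big1 ?addr0 => [|i _]; last first.
    by apply: big1 => a _.
  rewrite elt_ord0 (bigD1 (opt_act q)) /=; last by case/andP: (opt_actP q).
  rewrite eqxx big1 ?addr0 // => a /andP [_ a_opt].
  by rewrite xpair_eqE /= (negbTE a_opt).
Qed.

Lemma ETotN_greedy_step N h q t p :
  last_state h = q :: t -> bp B q (opt_act q) = Some p ->
  ETotN B N.+1 greedy h = bc B q (opt_act q) +
    \sum_(b <- fd_supp p) fd_w p b *
      ETotN B N greedy (extend h (0%N, opt_act q) (b ++ t)).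
Proof.
move=> E Ep /=; rewrite E big_ord_recl [X in _ + X]big1 ?addr0 => [|i _]; last first.
  by apply: big1 => a _; case: (bp B _ a) => // p'; rewrite (greedy_cons _ E) mul0r.
rewrite elt_ord0 (bigD1 (opt_act q)) //= Ep.
rewrite [X in _ + X]big1 ?addr0 => [|a a_opt]; last first.
  case: (bp B q a) => // p'.
  by rewrite (greedy_cons _ E) xpair_eqE /= (negbTE a_opt) mul0r.
by rewrite (greedy_cons _ E) eqxx mul1r /replace_at /= drop0.
Qed.

(* Upper bound: from any history, N steps of the greedy strategy cost at most
   the sum of W over the current state, since W solves the Bellman equation
   and the remaining types of the state are carried along unchanged. *)
Lemma ETotN_greedy_le N (h : hist T Act) :
  ((ETotN B N greedy h)%:E <= \sum_(x <- last_state h) W x)%E.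
Proof.
elim: N h => [|N IH] h; first by apply: sume_ge0 => x _; exact: W_ge0.
case E: (last_state h) => [|q t]; first by rewrite /= E big_ord0 big_nil.
have [opt_en le_opt] := andP (opt_actP q).
case Ep: (bp B q (opt_act q)) opt_en le_opt => [p|] // _ le_opt.
rewrite (ETotN_greedy_step _ E Ep) big_cons.
apply: le_trans (leeD2r _ le_opt); rewrite /bellmanE Ep EFinD -sumEFin -addeA leeD2l //.
rewrite -[X in (_ <= _ + X)%E]mul1e -(fd_sum1 p) -sumEFin ge0_sume_distrl => [|b _]; last first.
  by rewrite lee_fin fd_ge0.
rewrite -big_split /=; apply: lee_sum => b _.
rewrite EFinM -ge0_muleDr ?sume_ge0 // => [|x _|x _]; try exact: W_ge0.
apply: lee_wpmul2l; first by rewrite lee_fin fd_ge0.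
by have := IH (extend h (0%N, opt_act q) (b ++ t)); rewrite last_extend big_cat.
Qed.

Local Open Scope ereal_scope.

Lemma ETotal_le_W (al : seq T) : ETotal_star B al <= \sum_(x <- al) W x.
Proof.
apply: le_trans (ereal_inf_lbound _) _.
  by exists greedy; first exact: greedy_strategy.
by apply: ge_ereal_sup => _ [N _ <-]; exact: (ETotN_greedy_le N (al, [::])).
Qed.

Lemma ETotal_star_sum_W (al : seq T) : ETotal_star B al = \sum_(x <- al) W x.
Proof. by apply/le_anti; rewrite ETotal_le_W W_le_ETotal. Qed.

Local Close Scope ereal_scope.

End BMDPValue.

Local Open Scope ereal_scope.

Lemma sum_elt (R : realType) (T : finType) (F : T -> \bar R) (al : seq T) :
  \sum_(i < size al) F (elt i) = \sum_(x <- al) F x.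
Proof. by rewrite (big_tuple _ _ (in_tuple al)). Qed.

Theorem mainTheorem2 (R : realType) (T Act : finType) (B : BMDP R T Act) :
  (forall alpha : seq T,
     ETotal_star B alpha = (\sum_(i < size alpha) ETotal_star B [:: elt i])%E) /\
  (forall q : T,
     ETotal_star B [:: q] =
       \big[Order.min/+oo%E]_(a : Act | isSome (bp B q a)) bellman_val B q a).
Proof.
have single x : ETotal_star B [:: x] = W B x by rewrite ETotal_star_sum_W big_seq1.
have sum_single (al : seq T) : \sum_(i < size al) ETotal_star B [:: elt i] =
    \sum_(x <- al) W B x.
  by under eq_bigr do rewrite single; rewrite sum_elt.
split=> [alpha|q]; first by rewrite ETotal_star_sum_W sum_single.
rewrite single W_bellman; apply: eq_bigr => a _.
rewrite /bellmanE /bellman_val; case: (bp B q a) => // p.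
by congr (_ + _); apply: eq_bigr => b _; rewrite sum_single.
Qed.
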